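(* For an integer $k\ge1$, let $T_k$ be a complete ternary tree of height $k-1$ with root $r_k$ (so for $k=1$, $T_k$ is the single vertex $r_k$, which is also its unique leaf), and let $G_k^*$ be the multigraph obtained from $T_k$ by adding a new vertex $a_k$, one edge $a_kr_k$, and three parallel edges between $a_k$ and each leaf of $T_k$. Then $\mathrm{pw}(G_k^* )\ge k$ for every $k\ge 1$.
   Context: The height of a rooted tree is the maximum number of edges on a root-to-leaf path; a complete ternary tree of height $h$ is the rooted tree in which every non-leaf vertex has exactly three children and all leaves are at distance $h$ from the root. A path-decomposition of a multigraph $H$ is a sequence $(X_0,\dots,X_s)$ of subsets of $V(H)$ such that for each vertex $v$ the indices $i$ with $v\in X_i$ form a non-empty interval, and each edge has both ends in some $X_i$; its width is $\max_i|X_i|-1$, and the pathwidth $\mathrm{pw}(H)$ is the minimum width of a path-decomposition. *)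

From HB Require Import structures.
From mathcomp Require Import all_boot.
Set Implicit Arguments. Unset Strict Implicit. Unset Printing Implicit Defensive.

(* A finite multigraph: a finite vertex type V together with a list of edges
   (pairs of endpoints); repeated entries in the list are parallel edges. *)

Definition is_path_decomposition (V : finType) (E : seq (V * V))
    (X : seq {set V}) : Prop :=
  [/\ 0 < size X,
      (forall v : V, exists2 i, i < size X & v \in nth set0 X i),
      (forall (v : V) (i j l : nat), i <= j -> j <= l -> l < size X ->
          v \in nth set0 X i -> v \in nth set0 X l -> v \in nth set0 X j) &
      (forall e, e \in E -> exists2 i, i < size X &
          (e.1 \in nth set0 X i) && (e.2 \in nth set0 X i))].

Definition pd_width (V : finType) (X : seq {set V}) : nat :=
  (\max_(B <- X) #|B|) - 1.

Definition pw_ge (V : finType) (E : seq (V * V)) (k : nat) : Prop :=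
  forall X : seq {set V}, is_path_decomposition E X -> k <= pd_width X.

(* Vertices of the complete ternary tree T_k of height k-1: words over
   {0,1,2} of length n < k (a depth and a word of that length).  The root is
   the empty word, the children of w are w++[c] for c in {0,1,2}, and the
   leaves are the words of length k-1. *)
Definition Wd (k : nat) (n : 'I_k) : finType :=
  Finite.clone ((nat_of_ord n).-tuple 'I_3) _.
Definition TV (k : nat) : finType := {n : 'I_k & @Wd k n}.

Definition word k (w : TV k) : seq 'I_3 := val (tagged w).
Definition depth k (w : TV k) : nat := tag w.

Definition is_child k (w c : TV k) : bool :=
  [exists x : 'I_3, word c == rcons (word w) x].

(* Vertices of G_k^* : None is the new vertex a_k, Some w the tree vertex w *)
Definition GV (k : nat) := option (TV k).

Definition Gstar_edges (k : nat) : seq (GV k * GV k) :=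
  [seq (Some p.1, Some p.2) | p <- [seq (w, c) | w <- enum (TV k), c <- enum (TV k)]
                             & is_child p.1 p.2]
  ++ [seq (None, Some w) | w <- enum (TV k) & depth w == 0]
  ++ flatten [seq nseq 3 (None, Some w) | w <- enum (TV k) & (depth w).+1 == k].

From mathcomp Require Import all_boot zify.

(* A vertex set S is "contiguous" when the bags
   meeting S have consecutive indices; singletons are contiguous by the
   interval axiom, and so is the union of two contiguous sets sharing a bag.
   Hence every subtree T(s) of the ternary tree (rooted at the word s) is
   contiguous.  An "anchor" for T(s) is a contiguous set A, disjoint from
   T(s), sharing a bag with the root of T(s) and with each of its leaves.
   Main lemma (rich_subtree): if T(s) has m levels and A anchors it, some bag
   contains more than m vertices of T(s), or m of them together with a vertex
   of A.  For the induction step, A + {root} anchors each of the three child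
   subtrees; order the three bags given by induction as J p <= J q <= J r.
   The contiguous sets T(sp) + root + T(sr) and T(sp) + A + T(sr) then meet
   the middle bag J q, which supplies the extra vertices (rich_parent).
   Applied to the whole tree with anchor {a_k}, this yields a bag of more
   than k vertices, i.e. width at least k. *)

Set Implicit Arguments. Unset Strict Implicit.

Lemma node_ex K (s : seq 'I_3) : size s < K -> exists u : TV K, word u = s.
Proof.
move=> lt_sK.
by exists (@existT _ (fun n : 'I_K => Wd n) (Ordinal lt_sK) (in_tuple s : Wd (Ordinal lt_sK))).
Qed.

Lemma word_inj K : injective (@word K).
Proof.
move=> [n w] [n' w']; rewrite /word /= => Eww'.
have En : n = n' by apply: val_inj; rewrite /= -(size_tuple w) -(size_tuple w') Eww'.
by subst n'; congr existT; apply: val_inj.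
Qed.

Lemma size_word K (u : TV K) : size (word u) = depth u.
Proof. by case: u => n w; rewrite /word /depth /= size_tuple. Qed.

Lemma size_word_lt K (u : TV K) : size (word u) < K.
Proof. by rewrite size_word /depth; case: u => n w /=. Qed.

Lemma edge_tree K (w c : TV K) x : word c = rcons (word w) x ->
  (Some w, Some c) \in Gstar_edges K.
Proof.
move=> Ec; rewrite /Gstar_edges !mem_cat; apply/orP; left.
apply/mapP; exists (w, c) => //; rewrite mem_filter /is_child /=.
apply/andP; split; first by apply/existsP; exists x; rewrite Ec.
by apply/allpairsP; exists (w, c); rewrite !mem_enum.
Qed.

Lemma edge_root K (u : TV K) : word u = [::] -> (None, Some u) \in Gstar_edges K.
Proof.
move=> Eu; rewrite /Gstar_edges !mem_cat; apply/orP; right; apply/orP; left.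
by apply/mapP; exists u => //; rewrite mem_filter mem_enum -size_word Eu.
Qed.

Lemma edge_leaf K (u : TV K) : (size (word u)).+1 = K ->
  (None, Some u) \in Gstar_edges K.
Proof.
move=> Eu; rewrite /Gstar_edges !mem_cat; apply/orP; right; apply/orP; right.
apply/flattenP; exists (nseq 3 (None, Some u)); last by rewrite in_cons eqxx.
by apply/mapP; exists u => //; rewrite mem_filter mem_enum -size_word Eu eqxx.
Qed.

Lemma median3 (f : 'I_3 -> nat) :
  exists p q r, [/\ p != q, q != r, f p <= f q & f q <= f r].
Proof.
pose a : 'I_3 := @Ordinal 3 0 isT; pose b : 'I_3 := @Ordinal 3 1 isT.
pose c : 'I_3 := @Ordinal 3 2 isT.
case: (leqP (f a) (f b)); case: (leqP (f b) (f c)); case: (leqP (f a) (f c)) => *;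
first [ by exists a, b, c; split=> //; lia | by exists a, c, b; split=> //; lia
      | by exists b, a, c; split=> //; lia | by exists b, c, a; split=> //; lia
      | by exists c, a, b; split=> //; lia | by exists c, b, a; split=> //; lia ].
Qed.

Lemma card_lt1 (V : finType) (B C : {set V}) y :
  B \subset C -> y \in C -> y \notin B -> #|B| < #|C|.
Proof.
move=> BC yC yB; have := subset_leq_card (_ : y |: B \subset C).
by rewrite cardsU1 yB; apply; rewrite subUset sub1set yC BC.
Qed.

Lemma card_lt2 (V : finType) (B C : {set V}) y z : B \subset C ->
  y \in C -> y \notin B -> z \in C -> z \notin B -> y != z -> #|B|.+1 < #|C|.
Proof.
move=> BC yC yB zC zB yz; have := subset_leq_card (_ : y |: (z |: B) \subset C).
rewrite cardsU1 cardsU1 zB !inE (negbTE yz) (negbTE yB) /=; apply.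
by rewrite !subUset !sub1set yC zC BC.
Qed.

Section Contiguity.
Variables (V : finType) (X : seq {set V}).

Definition meets j (S : {set V}) := nth set0 X j :&: S != set0.

Definition contiguous (S : {set V}) := forall i j l, i <= j -> j <= l ->
  meets i S -> meets l S -> meets j S.

Lemma meetsP j (S : {set V}) :
  reflect (exists2 x, x \in nth set0 X j & x \in S) (meets j S).
Proof.
apply: (iffP (set0Pn _)) => [[x]|[x xj xS]]; last by exists x; rewrite inE xj xS.
by rewrite inE => /andP[xj xS]; exists x.
Qed.

Lemma meets1 j v : meets j [set v] = (v \in nth set0 X j).
Proof. by apply/meetsP/idP => [[x vj /[!inE] /eqP <-] //|vj]; exists v; rewrite ?inE. Qed.

Lemma meetsU j (S T : {set V}) : meets j (S :|: T) = meets j S || meets j T.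
Proof. by rewrite /meets setIUr -negb_and setU_eq0. Qed.

Lemma meetsS j (S T : {set V}) : S \subset T -> meets j S -> meets j T.
Proof. by move=> /subsetP ST /meetsP[x xj xS]; apply/meetsP; exists x; rewrite ?ST. Qed.

Lemma contiguousU (S T : {set V}) : contiguous S -> contiguous T ->
  (exists c, meets c S && meets c T) -> contiguous (S :|: T).
Proof.
move=> cS cT [c /andP[cS' cT']] i j l ij jl; rewrite !meetsU.
case/orP=> [iS|iT] /orP[lS|lT].
- by rewrite (cS i j l).
- have [jc|cj] := leqP j c; first by rewrite (cS i j c).
  by rewrite (cT c j l) ?orbT // ltnW.
- have [jc|cj] := leqP j c; first by rewrite (cT i j c) ?orbT.
  by rewrite (cS c j l) // ltnW.
- by rewrite (cT i j l) ?orbT.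
Qed.

Lemma contiguous_between (S Z R : {set V}) i j l :
  contiguous S -> contiguous Z -> contiguous R ->
  (exists c, meets c S && meets c Z) -> (exists c, meets c Z && meets c R) ->
  i <= j -> j <= l -> meets i S -> meets l R -> meets j (S :|: Z :|: R).
Proof.
move=> cS cZ cR [c /andP[cS' cZ']] [d /andP[dZ dR]] ij jl iS lR.
apply: (contiguousU (contiguousU cS cZ _) cR _ ij jl); last by rewrite meetsU lR orbT.
- by exists c; rewrite cS' cZ'.
- by exists d; rewrite meetsU dZ orbT dR.
- by rewrite !meetsU iS.
Qed.

Lemma contiguous1 E v : is_path_decomposition E X -> contiguous [set v].
Proof.
case=> _ _ interval _ i j l ij jl; rewrite !meets1 => vi vl.
apply: (interval v i j l) => //; case: (ltnP l (size X)) => // /(nth_default set0) E0.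
by rewrite E0 inE in vl.
Qed.

Lemma wide_bag_width w j : w < #|nth set0 X j| -> w <= pd_width X.
Proof.
move=> big; have jX : j < size X.
  by case: (ltnP j (size X)) => // /(nth_default set0) E0; rewrite E0 cards0 in big.
have := @leq_bigmax_seq _ X predT (fun B : {set V} => #|B|) _ (mem_nth set0 jX) isT.
by rewrite /pd_width => /(leq_trans big); case: (\max_(B <- X) #|B|) => // n; rewrite subn1.
Qed.

End Contiguity.

Section TernaryTree.
Variables (K : nat) (X : seq {set GV K}).
Hypothesis HX : is_path_decomposition (Gstar_edges K) X.

Definition subtree (s : seq 'I_3) : {set GV K} :=
  [set x | if x is Some u then prefix s (word u) else false].

Lemma in_subtree s u : (Some u \in subtree s) = prefix s (word u).
Proof. by rewrite inE. Qed.

Lemma apex_notin_subtree s : (None \in subtree s) = false.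
Proof. by rewrite inE. Qed.

Lemma subtree_rcons s x y : y \in subtree (rcons s x) -> y \in subtree s.
Proof.
by case: y => [v|]; rewrite ?in_subtree ?apex_notin_subtree // => /(prefix_trans (prefix_rcons s x)).
Qed.

Lemma subtree_disjoint s x x' y : x != x' ->
  y \in subtree (rcons s x) -> y \in subtree (rcons s x') -> False.
Proof.
case: y => [v|]; rewrite ?in_subtree ?apex_notin_subtree // => xx'.
rewrite !prefixE !size_rcons => /eqP-> /eqP /rcons_inj [Ex].
by rewrite Ex eqxx in xx'.
Qed.

Lemma root_notin_child s u x : word u = s -> Some u \in subtree (rcons s x) -> False.
Proof. by move=> Hu; rewrite in_subtree Hu => /size_prefix; rewrite size_rcons ltnn. Qed.

Lemma root_in_subtree s u : word u = s -> Some u \in subtree s.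
Proof. by move=> Hu; rewrite in_subtree Hu prefix_refl. Qed.

Lemma subtree_leaf s u : word u = s -> (size s).+1 = K -> subtree s = [set Some u].
Proof.
move=> Hu Hs; apply/setP => [[v|]]; rewrite !inE //.
apply/idP/idP => [sv|/eqP[->]]; last by rewrite Hu prefix_refl.
apply/eqP; congr Some; apply: word_inj; rewrite Hu.
have := size_word_lt v; move: sv; rewrite prefixE => /eqP <- vK.
by rewrite take_oversize // -ltnS Hs.
Qed.

Lemma subtree_split s u : word u = s -> size s < K.-1 ->
  subtree s = [set Some u] :|: subtree (rcons s ord0)
              :|: subtree (rcons s (@Ordinal 3 1 isT)) :|: subtree (rcons s ord_max).
Proof.
move=> Hu Hs; apply/setP => [[v|]]; rewrite !inE //.
apply/idP/idP => [/prefixP[[|y t] Ev]|].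
- by rewrite cats0 -Hu in Ev; rewrite (word_inj Ev) eqxx.
- have : prefix (rcons s y) (word v) by apply/prefixP; exists t; rewrite cat_rcons.
  have : [\/ y = ord0, y = @Ordinal 3 1 isT | y = ord_max].
    by case: y {Ev} => [[|[|[|//]]] ?]; [constructor 1|constructor 2|constructor 3];
       apply: val_inj.
  by case=> -> ->; rewrite ?orbT.
- have up x : prefix (rcons s x) (word v) -> prefix s (word v).
    exact: prefix_trans (prefix_rcons s x).
  by move=> /orP[/orP[/orP[/eqP[->]|/up//]|/up//]|/up//]; rewrite Hu prefix_refl.
Qed.

Lemma bag_edge e : e \in Gstar_edges K ->
  exists j, (e.1 \in nth set0 X j) && (e.2 \in nth set0 X j).
Proof. by case: HX => _ _ _ edges /edges [j _ ?]; exists j. Qed.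

Lemma child_bag s u x : word u = s -> size s < K.-1 ->
  exists j, meets X j [set Some u] && meets X j (subtree (rcons s x)).
Proof.
move=> Hu Hs; have [c Hc] : exists c : TV K, word c = rcons s x.
  by apply: node_ex; rewrite size_rcons; lia.
have [j /andP[uj cj]] := bag_edge (edge_tree (etrans Hc (congr1 (rcons^~ x) (esym Hu)))).
by exists j; rewrite meets1 uj /=; apply/meetsP; exists (Some c); rewrite // in_subtree Hc prefix_refl.
Qed.

(* Subtrees are contiguous: root plus three contiguous child subtrees, each
   sharing a bag with the root (induction on the height). *)
Lemma contiguous_subtree s : size s < K -> contiguous X (subtree s).
Proof.
move Em : (K - (size s).+1) => m; elim: m s Em => [|m IH] s Em Hs;
  have [u Hu] := node_ex Hs.
  by rewrite (subtree_leaf Hu); [exact: contiguous1 HX | lia].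
have Hs' : size s < K.-1 by lia.
have cx x : contiguous X (subtree (rcons s x)) by apply: IH; rewrite size_rcons; lia.
have grow x (T : {set GV K}) : contiguous X T -> [set Some u] \subset T ->
    contiguous X (T :|: subtree (rcons s x)).
  move=> cT uT; apply: contiguousU cT (cx x) _.
  have [j /andP[uj xj]] := child_bag x Hu Hs'.
  by exists j; rewrite xj andbT; apply: meetsS uj.
rewrite (subtree_split Hu Hs').
apply: (grow ord_max); last by rewrite -!setUA subsetUl.
apply: (grow (@Ordinal 3 1 isT)); last exact: subsetUl.
exact: grow ord0 _ (contiguous1 HX) (subxx _).
Qed.

Definition anchored s (A : {set GV K}) :=
  [/\ contiguous X A,
      forall v : TV K, prefix s (word v) -> (size (word v)).+1 = K ->
        exists j, (Some v \in nth set0 X j) && meets X j A &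
      forall u : TV K, word u = s -> exists j, (Some u \in nth set0 X j) && meets X j A].

Definition rich m s (A : {set GV K}) j :=
  (m < #|nth set0 X j :&: subtree s|)
  || (m <= #|nth set0 X j :&: subtree s|) && meets X j A.

Lemma rich_meets m s A j : rich m.+1 s A j -> meets X j (subtree s).
Proof.
by rewrite /rich /meets => /orP[lt|/andP[le _]]; rewrite -card_gt0; lia.
Qed.

Lemma anchored_apex : anchored [::] [set None].
Proof.
split.
- exact: contiguous1 HX.
- move=> v _ /edge_leaf /bag_edge [j /andP[aj vj]].
  by exists j; rewrite meets1 vj.
- move=> u /edge_root /bag_edge [j /andP[aj uj]].
  by exists j; rewrite meets1 uj.
Qed.

(* The anchor of a subtree shares a bag with each child subtree, through a
   leaf below that child. *)
Lemma anchor_child_bag s x A : size s < K.-1 -> anchored s A ->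
  exists j, meets X j (subtree (rcons s x)) && meets X j A.
Proof.
move=> Hs [_ leaves _].
have /node_ex [v Hv] : size (rcons s x ++ nseq (K.-1 - (size s).+1) ord0) < K.
  by rewrite size_cat size_rcons size_nseq; lia.
have xv : prefix (rcons s x) (word v) by rewrite Hv prefix_prefix.
have K_gt0 : 0 < K := leq_ltn_trans (leq0n _) (leq_trans Hs (leq_pred K)).
have [|j /andP[vj jA]] := leaves v (prefix_trans (prefix_rcons s x) xv).
  by rewrite Hv size_cat size_rcons size_nseq subnKC // prednK.
by exists j; rewrite jA andbT; apply/meetsP; exists (Some v); rewrite ?in_subtree.
Qed.

Lemma anchored_child s u x A : word u = s -> size s < K.-1 -> anchored s A ->
  anchored (rcons s x) (A :|: [set Some u]).
Proof.
move=> Hu Hs [cA leaves root]; split.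
- apply: contiguousU cA (contiguous1 HX) _.
  by have [j /andP[uj jA]] := root u Hu; exists j; rewrite jA meets1.
- move=> v xv Hv; have [j /andP[vj jA]] := leaves v (prefix_trans (prefix_rcons s x) xv) Hv.
  by exists j; rewrite vj meetsU jA.
- move=> c Hc.
  have [j /andP[uj cj]] := bag_edge (edge_tree (etrans Hc (congr1 (rcons^~ x) (esym Hu)))).
  by exists j; rewrite cj meetsU meets1 uj orbT.
Qed.

Lemma median_bag_meets m s A Z (J : 'I_3 -> nat) p q r :
  size s < K.-1 -> contiguous X Z ->
  (forall x, exists j, meets X j (subtree (rcons s x)) && meets X j Z) ->
  J p <= J q -> J q <= J r -> (forall x, rich m.+1 (rcons s x) A (J x)) ->
  exists2 y, y \in nth set0 X (J q) &
             y \in subtree (rcons s p) :|: Z :|: subtree (rcons s r).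
Proof.
move=> Hs cZ shareZ Jpq Jqr richJ; apply/meetsP.
have cS x : contiguous X (subtree (rcons s x)).
  by apply: contiguous_subtree; rewrite size_rcons; lia.
apply: contiguous_between (cS p) cZ (cS r) _ _ Jpq Jqr (rich_meets (richJ p))
                          (rich_meets (richJ r)).
- by have [j ?] := shareZ p; exists j.
- by have [j /andP[? ?]] := shareZ r; exists j; apply/andP.
Qed.

Lemma sibling_vertex s u x q y (B : {set GV K}) : word u = s -> x != q ->
  y \in B -> y \in subtree (rcons s x) ->
  [/\ y \in B :&: subtree s, y \notin B :&: subtree (rcons s q) & y != Some u].
Proof.
move=> Hu xq yB yx; split; first by rewrite in_setI yB (subtree_rcons yx).
- by rewrite in_setI yB; apply/negP => yq; apply: subtree_disjoint xq yx yq.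
- by apply/eqP => Ey; rewrite Ey in yx; apply: root_notin_child Hu yx.
Qed.

Lemma rich_parent m s u A (J : 'I_3 -> nat) p q r :
  word u = s -> size s < K.-1 -> contiguous X A ->
  (forall x, exists j, meets X j (subtree (rcons s x)) && meets X j A) ->
  p != q -> q != r -> J p <= J q -> J q <= J r ->
  (forall x, rich m.+1 (rcons s x) (A :|: [set Some u]) (J x)) ->
  rich m.+2 s A (J q).
Proof.
move=> Hu Hs cA childA pq qr Jpq Jqr richJ; have rq : r != q by rewrite eq_sym.
set B := nth set0 X (J q).
have sub : B :&: subtree (rcons s q) \subset B :&: subtree s.
  by apply/subsetP => y; rewrite !in_setI => /andP[-> /subtree_rcons ->].
have [uS uq] : Some u \in subtree s /\ Some u \notin B :&: subtree (rcons s q).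
  by split; [exact: root_in_subtree | rewrite in_setI; apply/nandP; right;
     apply/negP; apply: root_notin_child Hu].
(* the chain T(sp) - root - T(sr) gives one vertex of T(s) outside T(sq) *)
have one_more : #|B :&: subtree (rcons s q)| < #|B :&: subtree s|.
  have [|y yB] := median_bag_meets Hs (contiguous1 (v := Some u) HX) _ Jpq Jqr richJ.
    by move=> x; have [j ?] := child_bag x Hu Hs; exists j; rewrite andbC.
  case/setUP=> [/setUP[yp|]|yr].
  - by have [yS yq _] := sibling_vertex Hu pq yB yp; apply: card_lt1 sub yS yq.
  - by rewrite inE => /eqP Ey; subst y; apply: card_lt1 sub _ uq; rewrite in_setI yB.
  - by have [yS yq _] := sibling_vertex Hu rq yB yr; apply: card_lt1 sub yS yq.
have := richJ q; rewrite /rich -/B => /orP[big|/andP[le]].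
  by rewrite (leq_ltn_trans big one_more).
rewrite meetsU => /orP[BA|]; first by rewrite (leq_ltn_trans le one_more) BA orbT.
(* the root is in B: the chain T(sp) - A - T(sr) gives a second witness *)
rewrite meets1 => uB; have uBS : Some u \in B :&: subtree s by rewrite in_setI uB.
have [z zB] := median_bag_meets Hs cA childA Jpq Jqr richJ.
case/setUP=> [/setUP[zp|zA]|zr].
- have [zS zq zu] := sibling_vertex Hu pq zB zp; apply/orP; left.
  by apply: leq_trans (card_lt2 sub zS zq uBS uq zu); rewrite !ltnS.
- apply/orP; right; rewrite (leq_ltn_trans le (card_lt1 sub uBS uq)).
  by apply/meetsP; exists z.
- have [zS zq zu] := sibling_vertex Hu rq zB zr; apply/orP; left.
  by apply: leq_trans (card_lt2 sub zS zq uBS uq zu); rewrite !ltnS.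
Qed.

Lemma rich_subtree m : 0 < m -> forall s, size s + m = K ->
  forall A, anchored s A -> exists j, rich m s A j.
Proof.
elim: m => [//|[|m] IH] _ s Hs A anchA;
  have /node_ex [u Hu] : size s < K by rewrite -Hs addnS ltnS leq_addr.
  (* one level: the bag shared by the root and the anchor is rich *)
  case: anchA => _ _ /(_ u Hu) [j /andP[uj jA]]; exists j; rewrite /rich jA andbT.
  by apply/orP; right; apply/card_gt0P; exists (Some u); rewrite in_setI uj root_in_subtree.
have Hs' : size s < K.-1 by rewrite -Hs !addnS /= ltnS leq_addr.
have /fin_all_exists [J richJ] :
    forall x, exists j, rich m.+1 (rcons s x) (A :|: [set Some u]) j.
  move=> x; apply: IH => //; last exact: anchored_child.
  by rewrite size_rcons addSnnS.
have [p [q [r [pq qr Jpq Jqr]]]] := median3 J.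
have [cA _ _] := anchA.
exists (J q); apply: (rich_parent Hu Hs' cA _ pq qr Jpq Jqr richJ).
by move=> x; apply: anchor_child_bag Hs' anchA.
Qed.

Lemma rich_apex_card j : rich K [::] [set None] j -> K < #|nth set0 X j|.
Proof.
have sub : nth set0 X j :&: subtree [::] \subset nth set0 X j by apply: subsetIl.
case/orP=> [big|/andP[le]]; first exact: leq_trans big (subset_leq_card sub).
rewrite meets1 => aj; apply: leq_ltn_trans le (card_lt1 sub aj _).
by rewrite in_setI apex_notin_subtree andbF.
Qed.

End TernaryTree.

Theorem lemma3p5 (k : nat) : 1 <= k -> pw_ge (Gstar_edges k) k.
Proof.
move=> k_gt0 X HX.
have [j richj] := rich_subtree HX k_gt0 (s := [::]) (add0n k) (anchored_apex HX).
exact: wide_bag_width (rich_apex_card richj).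
Qed.
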